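(* Let $A \in \mathbb{C}^{N \times N}$ have an orthonormal basis of eigenvectors $\psi_1,\ldots,\psi_N$ with eigenvalues $\lambda_1,\ldots,\lambda_N$ ordered so that $|\lambda_1| > |\lambda_2| \ge |\lambda_3| \ge \cdots \ge |\lambda_N|$. Let $v \in \mathbb{C}^N$ with $\|v\| = 1$, let $e \in \mathbb{C}^N$ be arbitrary, and let $\theta = \measuredangle(v,\psi_1)$. If $$\frac{\|e\|}{|\lambda_1|} < \left(1 - \left|\frac{\lambda_2}{\lambda_1}\right|\right)\frac{\cos(\theta)\sin(\theta)}{\cos(\theta)+\sin(\theta)},$$ then $\measuredangle(Av+e,\psi_1) < \measuredangle(v,\psi_1)$.
   Context: $\|\cdot\|$ is the Euclidean norm. For nonzero $x,y \in \mathbb{C}^N$, the angle $\measuredangle(x,y)\in[0,\pi/2]$ is defined by $\cos\measuredangle(x,y) = |\langle x, y\rangle|/(\|x\|\,\|y\|)$; equivalently, with $\mathcal{P} = \psi_1\psi_1^{*}$ and $\mathcal{P}_\perp = I - \mathcal{P}$, one has $\tan\measuredangle(x,\psi_1) = \|\mathcal{P}_\perp x\|/\|\mathcal{P} x\|$. The vector $e$ models an arbitrary perturbation (e.g. a truncation error) of the product $Av$ in one step of inexact power iteration. *)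

From HB Require Import structures.
From mathcomp Require Import all_boot all_order all_algebra.
From mathcomp Require Import complex.
From mathcomp Require Import reals trigo.
Set Implicit Arguments. Unset Strict Implicit. Unset Printing Implicit Defensive.
Import Order.TTheory GRing.Theory Num.Theory.
Local Open Scope ring_scope.

Definition cmod (R : realType) (z : R[i]) : R :=
  Num.sqrt (complex.Re z ^+ 2 + complex.Im z ^+ 2).

Definition cdot (R : realType) (N : nat) (x y : 'cV[R[i]]_N) : R[i] :=
  \sum_(k < N) x k 0 * conjc (y k 0).

Definition vnorm (R : realType) (N : nat) (x : 'cV[R[i]]_N) : R :=
  Num.sqrt (\sum_(k < N) cmod (x k 0) ^+ 2).

Definition vangle (R : realType) (N : nat) (x y : 'cV[R[i]]_N) : R :=
  acos (cmod (cdot x y) / (vnorm x * vnorm y)).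

(* In the orthonormal eigenbasis let c = |<v, psi_1>| = cos theta and let s =
   sin theta be the norm of the remaining coordinates of v.  After one inexact
   step the first coordinate has modulus p >= |lambda_1| c - ||e|| and the
   others have norm q <= |lambda_2| s + ||e||.  The hypothesis is equivalent to
   ||e|| (c + s) < (|lambda_1| - |lambda_2|) c s, which yields c q < s p: the
   tangent q / p of the new angle is below s / c = tan theta. *)

From HB Require Import structures.
From mathcomp Require Import all_boot all_order all_algebra.
From mathcomp Require Import complex.
From mathcomp Require Import reals trigo.
From mathcomp Require Import ring lra.
Import Order.TTheory GRing.Theory Num.Theory.
Local Open Scope ring_scope.
Local Open Scope complex_scope.
Set Implicit Arguments. Unset Strict Implicit. Unset Printing Implicit Defensive.

Lemma cauchy_schwarz (R : realDomainType) m (a b : 'I_m -> R) :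
  (\sum_i a i * b i) ^+ 2 <= (\sum_i a i ^+ 2) * (\sum_i b i ^+ 2).
Proof.
have lagrange : \sum_i \sum_j (a i * b j - a j * b i) ^+ 2 =
    \sum_i \sum_j a i ^+ 2 * b j ^+ 2 + \sum_i \sum_j a j ^+ 2 * b i ^+ 2
    - 2%:R * \sum_i \sum_j (a i * b i) * (a j * b j).
  rewrite mulr_sumr -big_split -sumrB /=; apply: eq_bigr => i _.
  rewrite mulr_sumr -big_split -sumrB /=; apply: eq_bigr => j _.
  ring.
rewrite [X in _ + X - _]exchange_big /= -!big_distrlr /= -expr2 in lagrange.
have : 0 <= \sum_i \sum_j (a i * b j - a j * b i) ^+ 2.
  by apply: sumr_ge0 => i _; apply: sumr_ge0 => j _; exact: sqr_ge0.
rewrite lagrange; lra.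
Qed.

Section L2norm.
Variables (R : rcfType) (m : nat).
Implicit Types a b : 'I_m -> R.

Definition l2norm a : R := Num.sqrt (\sum_i a i ^+ 2).

Lemma l2norm_ge0 a : 0 <= l2norm a.
Proof. exact: sqrtr_ge0. Qed.

Lemma sqr_l2norm a : l2norm a ^+ 2 = \sum_i a i ^+ 2.
Proof. by rewrite sqr_sqrtr // sumr_ge0 // => i _; exact: sqr_ge0. Qed.

Lemma ler_l2norm a b : (forall i, 0 <= a i <= b i) -> l2norm a <= l2norm b.
Proof.
move=> le_ab; rewrite ler_sqrt ?sumr_ge0 //; last by move=> i _; exact: sqr_ge0.
apply: ler_sum => i _; have /andP[a_ge0 le_ai] := le_ab i.
by rewrite ler_pXn2r ?nnegrE // (le_trans a_ge0).
Qed.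

Lemma l2normZ k a : l2norm (fun i => k * a i) = `|k| * l2norm a.
Proof.
rewrite /l2norm; under eq_bigr do rewrite exprMn.
by rewrite -mulr_sumr sqrtrM ?sqr_ge0 // sqrtr_sqr.
Qed.

Lemma l2normD a b : l2norm (fun i => a i + b i) <= l2norm a + l2norm b.
Proof.
rewrite -(ger0_norm (addr_ge0 (l2norm_ge0 a) (l2norm_ge0 b))) -sqrtr_sqr.
rewrite ler_sqrt ?sqr_ge0 // sqrrD !sqr_l2norm.
have -> : \sum_i (a i + b i) ^+ 2 =
    \sum_i a i ^+ 2 + \sum_i b i ^+ 2 + 2%:R * \sum_i a i * b i.
  by rewrite mulr_sumr -!big_split; apply: eq_bigr => i _ /=; ring.
have cs : \sum_i a i * b i <= l2norm a * l2norm b.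
  rewrite (le_trans (ler_norm _)) // -sqrtr_sqr -sqrtrM ?sumr_ge0 //.
  - by rewrite ler_wsqrtr // cauchy_schwarz.
  - by move=> i _; exact: sqr_ge0.
lra.
Qed.

End L2norm.

Section CosLegs.
Variable R : rcfType.
Implicit Types c s p q : R.

(* The cosine of the angle whose tangent is q / p. *)
Definition cos_legs p q : R := p / Num.sqrt (p ^+ 2 + q ^+ 2).

Lemma cos_legs_unit c s : c ^+ 2 + s ^+ 2 = 1 -> cos_legs c s = c.
Proof. by rewrite /cos_legs => ->; rewrite sqrtr1 divr1. Qed.

Lemma cos_legs_itv p q : 0 <= p -> cos_legs p q \in `[-1, 1].
Proof.
move=> p_ge0; rewrite in_itv /= (le_trans (lerN10 _)) ?divr_ge0 ?sqrtr_ge0 //=.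
rewrite /cos_legs; have [->|p_neq0] := eqVneq p 0; first by rewrite mul0r ler01.
have pos : 0 < p ^+ 2 + q ^+ 2.
  by rewrite ltr_pwDl ?sqr_ge0 ?exprn_gt0 // lt_def p_neq0.
rewrite ler_pdivrMr ?sqrtr_gt0 // mul1r -{1}(ger0_norm p_ge0) -sqrtr_sqr.
by rewrite ler_sqrt ?lerDl ?sqr_ge0 // ltW.
Qed.

Lemma lt_cos_legs c s p q : 0 <= c -> 0 <= s -> 0 <= p -> 0 <= q ->
  c * q < s * p -> cos_legs c s < cos_legs p q.
Proof.
move=> c_ge0 s_ge0 p_ge0 q_ge0 cross.
have s_gt0 : 0 < s by nra.
have p_gt0 : 0 < p by nra.
have sq_cross : c ^+ 2 * q ^+ 2 < s ^+ 2 * p ^+ 2.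
  by rewrite -!exprMn ltr_pXn2r ?nnegrE ?mulr_ge0.
have D_cs : 0 < Num.sqrt (c ^+ 2 + s ^+ 2) by rewrite sqrtr_gt0; nra.
have D_pq : 0 < Num.sqrt (p ^+ 2 + q ^+ 2) by rewrite sqrtr_gt0; nra.
rewrite /cos_legs ltr_pdivrMr // mulrAC ltr_pdivlMr //.
rewrite -(ltr_pXn2r (_ : 0 < 2)%N) ?nnegrE ?mulr_ge0 ?sqrtr_ge0 //.
rewrite !exprMn !sqr_sqrtr ?addr_ge0 ?sqr_ge0 //; lra.
Qed.

End CosLegs.

Section Acos.
Variable R : realType.

Lemma ltr_acos : {in `[-1, 1] &, {mono @acos R : x y /~ y < x}}.
Proof.
have acos_itv x : x \in `[-1, 1] -> acos x \in `[0, pi].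
  by rewrite !in_itv /= => x_itv; rewrite acos_ge0 ?acos_lepi.
by move=> x y xI yI; rewrite -ltr_cos ?acos_itv // !acosK.
Qed.

Lemma cos_sin_acos (c s : R) : 0 <= c -> 0 <= s -> c ^+ 2 + s ^+ 2 = 1 ->
  cos (acos c) = c /\ sin (acos c) = s.
Proof.
move=> c_ge0 s_ge0 cs1; have c_itv : -1 <= c <= 1 by apply/andP; split; nra.
split; first by rewrite acosK // in_itv.
by rewrite sin_acos // -cs1 addrC addKr sqrtr_sqr ger0_norm.
Qed.

End Acos.

Lemma perturbed_cross_lt (R : realFieldType) (c s L l eps p q : R) :
  0 <= c -> 0 <= s -> 0 < c + s -> 0 < L ->
  L * c - eps <= p -> q <= l * s + eps ->
  eps / L < (1 - l / L) * (c * s / (c + s)) ->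
  c * q < s * p.
Proof.
move=> c_ge0 s_ge0 cs_gt0 L_gt0 le_p le_q small_eps.
have gap : eps * (c + s) < (L - l) * c * s.
  have -> : (L - l) * c * s = (1 - l / L) * (c * s / (c + s)) * (L * (c + s)).
    by field; rewrite ?gt_eqF.
  have -> : eps * (c + s) = eps / L * (L * (c + s)) by field; rewrite gt_eqF.
  by rewrite ltr_pM2r ?mulr_gt0.
have : c * q <= c * (l * s + eps) by rewrite ler_wpM2l.
have : s * (L * c - eps) <= s * p by rewrite ler_wpM2l.
lra.
Qed.

Section ComplexModulus.
Variable R : realType.
Implicit Types z w : R[i].

Lemma cmodE z : `|z| = (cmod z)%:C.
Proof. exact: normc_def. Qed.

Lemma cmod_ge0 z : 0 <= cmod z.
Proof. exact: sqrtr_ge0. Qed.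

Lemma cmodM z w : cmod (z * w) = cmod z * cmod w.
Proof. by apply: (@complexI R); rewrite -cmodE normrM !cmodE rmorphM. Qed.

Lemma cmodD z w : cmod (z + w) <= cmod z + cmod w.
Proof. by rewrite -lecR; have := ler_normD z w; rewrite !cmodE -rmorphD. Qed.

Lemma cmodBD z w : cmod z - cmod w <= cmod (z + w).
Proof. by rewrite -lecR; have := lerB_normD z w; rewrite !cmodE -rmorphB. Qed.

Lemma sqr_cmod z : (cmod z ^+ 2)%:C = z * z^*.
Proof.
case: z => a b; rewrite /cmod /= sqr_sqrtr ?addr_ge0 ?sqr_ge0 //.
by apply/eqP; rewrite eq_complex /=; apply/andP; split; apply/eqP; ring.
Qed.

End ComplexModulus.

Section Vectors.
Variables (R : realType) (n : nat).
Implicit Types x y : 'cV[R[i]]_n.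

Lemma vnormE x : vnorm x = l2norm (fun k => cmod (x k 0)).
Proof. by []. Qed.

Lemma vnorm_ge0 x : 0 <= vnorm x.
Proof. exact: sqrtr_ge0. Qed.

Lemma cdot_mx x y : cdot x y = ((map_mx conjc y)^T *m x) 0 0.
Proof. by rewrite mxE; apply: eq_bigr => k _; rewrite !mxE mulrC. Qed.

Lemma cdotxx x : cdot x x = (vnorm x ^+ 2)%:C.
Proof.
rewrite vnormE sqr_l2norm rmorph_sum.
by apply: eq_bigr => k _; exact/esym/sqr_cmod.
Qed.

Lemma vnorm_cdotxx x : vnorm x = Num.sqrt (complex.Re (cdot x x)).
Proof. by rewrite cdotxx /= sqrtr_sqr ger0_norm ?vnorm_ge0. Qed.

Section Eigenbasis.
Variable psi : 'I_n -> 'cV[R[i]]_n.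
Hypothesis psi_orthonormal : forall i j, cdot (psi i) (psi j) = (i == j)%:R.

Definition basis_mx : 'M[R[i]]_n := \matrix_(i, j) psi j i 0.
Definition coord_mx : 'M[R[i]]_n := (map_mx conjc basis_mx)^T.

Lemma coord_mxE x i : (coord_mx *m x) i 0 = cdot x (psi i).
Proof. by rewrite mxE; apply: eq_bigr => k _; rewrite !mxE mulrC. Qed.

Lemma coord_basis_mx : coord_mx *m basis_mx = 1%:M.
Proof.
apply/matrixP => i j; rewrite !mxE eq_sym -psi_orthonormal.
by apply: eq_bigr => k _; rewrite !mxE mulrC.
Qed.

Lemma basis_coord_mx : basis_mx *m coord_mx = 1%:M.
Proof. exact: mulmx1C coord_basis_mx. Qed.

Lemma vnorm_coord x : vnorm (coord_mx *m x) = vnorm x.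
Proof.
have adj : (map_mx conjc coord_mx)^T = basis_mx.
  by apply/matrixP => i j; rewrite !mxE conjcK.
rewrite !vnorm_cdotxx !cdot_mx map_mxM trmx_mul adj.
by rewrite mulmxA -(mulmxA _ basis_mx) basis_coord_mx mulmx1.
Qed.

Lemma vnorm_basis i : vnorm (psi i) = 1.
Proof. by rewrite vnorm_cdotxx psi_orthonormal eqxx sqrtr1. Qed.

Variables (A : 'M[R[i]]_n) (lambda : 'I_n -> R[i]).
Hypothesis psi_eigen : forall i, A *m psi i = lambda i *: psi i.

Lemma coord_mx_eigen x i :
  (coord_mx *m (A *m x)) i 0 = lambda i * (coord_mx *m x) i 0.
Proof.
have AP : A *m basis_mx = basis_mx *m diag_mx (\row_i lambda i).
  apply/matrixP => k j; rewrite mul_mx_diag !mxE.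
  have /matrixP/(_ k 0) := psi_eigen j; rewrite !mxE mulrC => <-.
  by apply: eq_bigr => l _; rewrite !mxE.
have -> : A = basis_mx *m diag_mx (\row_i lambda i) *m coord_mx.
  by rewrite -AP -mulmxA basis_coord_mx mulmx1.
by rewrite !mulmxA coord_basis_mx mul1mx -mulmxA mul_diag_mx !mxE.
Qed.

Lemma coord_mx_step x y i :
  (coord_mx *m (A *m x + y)) i 0 =
  lambda i * (coord_mx *m x) i 0 + (coord_mx *m y) i 0.
Proof. by rewrite mulmxDr -coord_mx_eigen; exact: mxE. Qed.

End Eigenbasis.
End Vectors.

Section FirstCoordinate.
Variables (R : realType) (n : nat).
Implicit Types x : 'cV[R[i]]_n.+1.

Definition vtail x : 'I_n -> R := fun k => cmod (x (lift ord0 k) 0).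

Lemma sqr_vnorm_split x :
  vnorm x ^+ 2 = cmod (x ord0 0) ^+ 2 + l2norm (vtail x) ^+ 2.
Proof. by rewrite vnormE !sqr_l2norm big_ord_recl. Qed.

Lemma cmod_head_le x : cmod (x ord0 0) <= vnorm x.
Proof.
rewrite -(ler_pXn2r (_ : 0 < 2)%N) ?nnegrE ?cmod_ge0 ?vnorm_ge0 //.
by rewrite sqr_vnorm_split lerDl sqr_ge0.
Qed.

Lemma l2norm_vtail_le x : l2norm (vtail x) <= vnorm x.
Proof.
rewrite -(ler_pXn2r (_ : 0 < 2)%N) ?nnegrE ?l2norm_ge0 ?vnorm_ge0 //.
by rewrite sqr_vnorm_split lerDr sqr_ge0.
Qed.

Variable psi : 'I_n.+1 -> 'cV[R[i]]_n.+1.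
Hypothesis psi_orthonormal : forall i j, cdot (psi i) (psi j) = (i == j)%:R.
Local Notation U := (coord_mx psi).

Lemma vangle_basis0 x : vangle x (psi ord0) =
  acos (cos_legs (cmod ((U *m x) ord0 0)) (l2norm (vtail (U *m x)))).
Proof.
rewrite /vangle vnorm_basis // mulr1 -coord_mxE.
rewrite -(vnorm_coord psi_orthonormal x).
by rewrite /cos_legs -sqr_vnorm_split sqrtr_sqr ger0_norm ?vnorm_ge0.
Qed.

Variables (A : 'M[R[i]]_n.+1) (lambda : 'I_n.+1 -> R[i]).
Hypothesis psi_eigen : forall i, A *m psi i = lambda i *: psi i.

Lemma head_step v e :
  cmod (lambda ord0) * cmod ((U *m v) ord0 0) - vnorm e <=
  cmod ((U *m (A *m v + e)) ord0 0).
Proof.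
rewrite (coord_mx_step psi_orthonormal psi_eigen) -cmodM.
apply: le_trans (cmodBD _ _); rewrite lerD2l lerN2.
by rewrite -(vnorm_coord psi_orthonormal e) cmod_head_le.
Qed.

Lemma tail_step v e l : 0 <= l ->
  (forall k, cmod (lambda (lift ord0 k)) <= l) ->
  l2norm (vtail (U *m (A *m v + e))) <= l * l2norm (vtail (U *m v)) + vnorm e.
Proof.
move=> l_ge0 lambda_le.
have tail_le : l2norm (vtail (U *m (A *m v + e))) <=
    l2norm (fun k => l * vtail (U *m v) k + vtail (U *m e) k).
  apply: ler_l2norm => k; rewrite cmod_ge0 /vtail.
  rewrite (coord_mx_step psi_orthonormal psi_eigen).
  apply: le_trans (cmodD _ _) _; rewrite lerD2r cmodM.
  by rewrite ler_wpM2r ?cmod_ge0.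
apply: le_trans tail_le _; apply: le_trans (l2normD _ _) _.
rewrite l2normZ ger0_norm // lerD2l -(vnorm_coord psi_orthonormal e).
exact: l2norm_vtail_le.
Qed.

End FirstCoordinate.

Theorem theorem2 (R : realType) (N : nat) (A : 'M[R[i]]_N.+2)
    (psi : 'I_N.+2 -> 'cV[R[i]]_N.+2) (lambda : 'I_N.+2 -> R[i])
    (v e : 'cV[R[i]]_N.+2) :
  (forall i j : 'I_N.+2, cdot (psi i) (psi j) = (i == j)%:R) ->
  (forall i : 'I_N.+2, A *m psi i = lambda i *: psi i) ->
  cmod (lambda (inord 1)) < cmod (lambda ord0) ->
  (forall i j : 'I_N.+2, (1 <= i)%N -> (i <= j)%N ->
     cmod (lambda j) <= cmod (lambda i)) ->
  vnorm v = 1 ->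
  let theta := vangle v (psi ord0) in
  vnorm e / cmod (lambda ord0) <
    (1 - cmod (lambda (inord 1)) / cmod (lambda ord0)) *
    (cos theta * sin theta / (cos theta + sin theta)) ->
  vangle (A *m v + e) (psi ord0) < vangle v (psi ord0).
Proof.
move=> ortho eig gap mono v1 theta small_e.
pose U := coord_mx psi.
pose c := cmod ((U *m v) ord0 0); pose s := l2norm (vtail (U *m v)).
have c_ge0 : 0 <= c := cmod_ge0 _.
have s_ge0 : 0 <= s := l2norm_ge0 _.
have cs1 : c ^+ 2 + s ^+ 2 = 1.
  by rewrite -sqr_vnorm_split vnorm_coord // v1 expr1n.
have cs_gt0 : 0 < c + s by nra.
have [cos_theta sin_theta] := cos_sin_acos c_ge0 s_ge0 cs1.
rewrite /theta vangle_basis0 // cos_legs_unit // cos_theta sin_theta in small_e.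
have L_gt0 : 0 < cmod (lambda ord0) := le_lt_trans (cmod_ge0 _) gap.
have lambda_tail k : cmod (lambda (lift ord0 k)) <= cmod (lambda (inord 1)).
  by apply: mono; rewrite inordK // lift0.
rewrite !vangle_basis0 // ltr_acos ?cos_legs_itv ?cmod_ge0 //.
apply: lt_cos_legs; rewrite ?cmod_ge0 ?l2norm_ge0 //.
exact: perturbed_cross_lt c_ge0 s_ge0 cs_gt0 L_gt0 (head_step ortho eig v e)
  (tail_step ortho eig v e (cmod_ge0 _) lambda_tail) small_e.
Qed.
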